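(* Let $\mathbb{F}$ be a field with $\mathrm{char}(\mathbb{F})\neq 2$. The category $\mathbf{Alt}_1$ of unitary alternative $\mathbb{F}$-algebras is action representable: for every unitary alternative algebra $X$ there is a natural isomorphism of functors $\mathbf{Alt}^{\mathrm{op}}\to\mathbf{Set}$ $$\mathrm{SplExt}(-,U(X))\cong\mathrm{Hom}_{\mathbf{Alt}}(-,U(X)),$$ so the actor of $X$ is isomorphic to $X$ itself.
   Context: $\mathbf{Alt}$ is the variety of alternative $\mathbb{F}$-algebras: non-associative algebras satisfying $(yx)x=y(xx)$ and $x(xy)=(xx)y$. For a variety $\mathcal{V}$ of non-associative algebras closed under adjoining an external unit, $\mathcal{V}_1$ denotes the category of algebras in $\mathcal{V}$ having a multiplicative unit, with unit-preserving algebra homomorphisms, and $U\colon\mathcal{V}_1\to\mathcal{V}$ is the forgetful functor. For objects $B,X$ of $\mathcal{V}$, a split extension of $B$ by $X$ is a diagram $X\xrightarrow{k}A\underset{\beta}{\overset{\alpha}{\rightleftarrows}}B$ in $\mathcal{V}$ with $\alpha\circ\beta=\mathrm{id}_B$ and $(X,k)$ a kernel of $\alpha$; $\mathrm{SplExt}(B,X)$ is the set of isomorphism classes of such split extensions, and $\mathrm{SplExt}(-,X)\colon\mathcal{V}^{\mathrm{op}}\to\mathbf{Set}$ is the functor acting on morphisms $f\colon B'\to B$ by pullback along $f$. The category $\mathcal{V}_1$ is called action representable if for every object $X$ of $\mathcal{V}_1$ the functor $\mathrm{SplExt}(-,U(X))\colon\mathcal{V}^{\mathrm{op}}\to\mathbf{Set}$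 is representable, i.e. naturally isomorphic to $\mathrm{Hom}_{\mathcal{V}}(-,T)$ for some object $T$ of $\mathcal{V}$ (called the actor of $X$). *)

From HB Require Import structures.
From mathcomp Require Import all_boot all_order all_algebra.
Set Implicit Arguments. Unset Strict Implicit. Unset Printing Implicit Defensive.
Import GRing.Theory.
Local Open Scope ring_scope.

Section Alt.
Variable F : fieldType.

Record altAlg := AltAlg {
  aT :> lmodType F;
  amul : aT -> aT -> aT;
  amulDl : forall x y z, amul (x + y) z = amul x z + amul y z;
  amulDr : forall x y z, amul x (y + z) = amul x y + amul x z;
  amulZl : forall (a : F) x y, amul (a *: x) y = a *: amul x y;
  amulZr : forall (a : F) x y, amul x (a *: y) = a *: amul x y;
  alt_right : forall x y, amul (amul y x) x = amul y (amul x x);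
  alt_left : forall x y, amul x (amul x y) = amul (amul x x) y
}.

Definition has_unit (A : altAlg) : Prop :=
  exists e : A, forall x : A, amul e x = x /\ amul x e = x.

Definition isHom (A B : altAlg) (f : A -> B) : Prop :=
  [/\ forall x y : A, f (x + y) = f x + f y,
      forall (a : F) (x : A), f (a *: x) = a *: f x
    & forall x y : A, f (amul x y) = amul (f x) (f y)].

Record splExt (B X : altAlg) := SplExt {
  sA : altAlg;
  sk : X -> sA;
  salpha : sA -> B;
  sbeta : B -> sA;
  sk_hom : isHom sk;
  salpha_hom : isHom salpha;
  sbeta_hom : isHom sbeta;
  ssplit : forall b : B, salpha (sbeta b) = b;
  sk_inj : injective sk;
  sk_ker : forall a : sA, salpha a = 0 <-> exists x : X, a = sk x
}.

Arguments sA {B X} s.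
Arguments sk {B X} s.
Arguments salpha {B X} s.
Arguments sbeta {B X} s.

Definition splExt_iso (B X : altAlg) (E E' : splExt B X) : Prop :=
  exists phi : sA E -> sA E',
    [/\ isHom phi, bijective phi,
        forall x : X, phi (sk E x) = sk E' x,
        forall a : sA E, salpha E' (phi a) = salpha E a
      & forall b : B, phi (sbeta E b) = sbeta E' b].

(* E' (over B') is a pullback of E (over B) along f : B' -> B:
   there is a homomorphism g : A' -> A compatible with all the structure
   maps such that the square (g, alpha', alpha, f) is a pullback square
   (A' -> A x_B B', a' |-> (g a', alpha' a') is bijective). *)
Definition isPullback (B B' X : altAlg) (f : B' -> B)
    (E : splExt B X) (E' : splExt B' X) : Prop :=
  exists g : sA E' -> sA E,
    [/\ isHom g /\
        (forall a' : sA E', salpha E (g a') = f (salpha E' a')),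
        forall x : X, g (sk E' x) = sk E x,
        forall b' : B', g (sbeta E' b') = sbeta E (f b'),
        forall (a : sA E) (b' : B'), salpha E a = f b' ->
          exists a' : sA E', g a' = a /\ salpha E' a' = b'
      & forall a1 a2 : sA E', g a1 = g a2 -> salpha E' a1 = salpha E' a2 ->
          a1 = a2].

End Alt.

From mathcomp Require Import all_boot all_order all_algebra.
From Stdlib Require Import ClassicalEpsilon.
Set Implicit Arguments. Unset Strict Implicit. Unset Printing Implicit Defensive.
Import GRing.Theory.
Local Open Scope ring_scope.

(* In a split extension of B by a unital X, the image k(X) is an ideal of A
   with unit e = k(1). Linearising the alternative laws shows that left
   multiplication by e is an algebra endomorphism of A, through which A acts
   on the ideal: k(x) a = k(x) (e a) and a k(x) = (e a) k(x). Hence the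
   extension is determined by the homomorphism B -> X, b |-> k^-1(e beta(b)):
   A is X x B with product (x1,b1)(x2,b2) = (x1 x2 + x1 h(b2) + h(b1) x2, b1 b2),
   and conversely every homomorphism h arises from the extension X x B with
   splitting b |-> (h b, b). *)

Local Notation "x ** y" := (amul x y) (at level 40, left associativity).

Lemma addr_cancel_ends (V : zmodType) (a b c d e f : V) :
  a + b + (c + d) = a + e + (f + d) -> b + c = e + f.
Proof.
move=> H; apply: (addrI a); apply: (addIr d); rewrite !addrA.
by rewrite !addrA in H.
Qed.

Section AltAlgebra.
Variables (F : fieldType) (A : altAlg F).

Lemma amul0l (y : A) : 0 ** y = 0.
Proof. by have := amulZl 0 (0 : A) y; rewrite !scale0r. Qed.

Lemma amul0r (y : A) : y ** 0 = 0.
Proof. by have := amulZr 0 y (0 : A); rewrite !scale0r. Qed.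

Lemma amulNl (x y : A) : (- x) ** y = - (x ** y).
Proof. by have := amulZl (-1) x y; rewrite !scaleN1r. Qed.

Lemma amulNr (x y : A) : y ** (- x) = - (y ** x).
Proof. by have := amulZr (-1) y x; rewrite !scaleN1r. Qed.

Lemma amulBl (x z y : A) : (x - z) ** y = x ** y - z ** y.
Proof. by rewrite amulDl amulNl. Qed.

Lemma amulBr (x z y : A) : y ** (x - z) = y ** x - y ** z.
Proof. by rewrite amulDr amulNr. Qed.

Lemma alt_left_lin (x z y : A) :
  x ** (z ** y) + z ** (x ** y) = (x ** z) ** y + (z ** x) ** y.
Proof.
have H := alt_left (x + z) y.
by rewrite !(amulDl, amulDr) !alt_left in H; apply: addr_cancel_ends H.
Qed.

Lemma alt_right_lin (x z y : A) :
  (y ** z) ** x + (y ** x) ** z = y ** (x ** z) + y ** (z ** x).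
Proof.
have H := alt_right (x + z) y.
by rewrite !(amulDl, amulDr) !alt_right in H; apply: addr_cancel_ends H.
Qed.

End AltAlgebra.

Definition unital_ideal (F : fieldType) (A : altAlg F) (I : A -> Prop) (e : A) :=
  [/\ forall a x, I x -> I (a ** x), forall a x, I x -> I (x ** a), I e
    & forall x, I x -> e ** x = x /\ x ** e = x].

Section UnitalIdeal.
Variables (F : fieldType) (A : altAlg F) (I : A -> Prop) (e : A).
Hypothesis I_unital : unital_ideal I e.

Let I_mull a x : I x -> I (a ** x). Proof. by case: I_unital => + _ _ _; apply. Qed.
Let I_mulr a x : I x -> I (x ** a). Proof. by case: I_unital => _ + _ _; apply. Qed.
Let I_unit : I e. Proof. by case: I_unital. Qed.
Let unit_mull x : I x -> e ** x = x. Proof. by case: I_unital => _ _ _ /(_ x) H /H []. Qed.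
Let unit_mulr x : I x -> x ** e = x. Proof. by case: I_unital => _ _ _ /(_ x) H /H []. Qed.

Lemma unit_mulC (a : A) : e ** a = a ** e.
Proof.
have H := alt_left_lin e a e.
rewrite (unit_mull (I_mull a I_unit)) (unit_mull I_unit) in H.
rewrite (unit_mulr (I_mulr a I_unit)) (unit_mulr (I_mull a I_unit)) in H.
by move/addIr: H.
Qed.

Lemma unit_mul_subl (a : A) : e ** (a - e ** a) = 0.
Proof. by rewrite amulBr (unit_mull (I_mulr _ I_unit)) subrr. Qed.

Lemma unit_mul_subr (a : A) : (a - e ** a) ** e = 0.
Proof. by rewrite amulBl (unit_mulr (I_mulr _ I_unit)) unit_mulC subrr. Qed.

Lemma ideal_mul_ann x n : I x -> e ** n = 0 -> x ** n = 0.
Proof.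
move=> Ix en0; have H := alt_left_lin x e n.
rewrite en0 amul0r add0r (unit_mull (I_mulr _ Ix)) (unit_mulr Ix) in H.
rewrite (unit_mull Ix) in H.
by apply/eqP; rewrite -(addrI _ (etrans (addr0 _) H)).
Qed.

Lemma ann_mul_ideal x n : I x -> n ** e = 0 -> n ** x = 0.
Proof.
move=> Ix ne0; have H := alt_right_lin e x n.
rewrite ne0 amul0l addr0 (unit_mulr (I_mull _ Ix)) (unit_mulr Ix) in H.
rewrite (unit_mull Ix) in H.
by apply: (addrI (n ** x)); rewrite addr0.
Qed.

Lemma unit_mul_ann_mul n m :
  e ** n = 0 -> n ** e = 0 -> e ** m = 0 -> e ** (n ** m) = 0.
Proof.
move=> en0 ne0 em0; have H := alt_left_lin e n m.
by rewrite em0 amul0r addr0 en0 ne0 !amul0l addr0 in H.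
Qed.

Lemma ideal_mul_unit x a : I x -> x ** a = x ** (e ** a).
Proof.
move=> Ix; rewrite -{1}(subrK (e ** a) a) amulDr.
by rewrite (ideal_mul_ann Ix (unit_mul_subl a)) add0r.
Qed.

Lemma unit_mul_ideal x a : I x -> a ** x = (e ** a) ** x.
Proof.
move=> Ix; rewrite -{1}(subrK (e ** a) a) amulDl.
by rewrite (ann_mul_ideal Ix (unit_mul_subr a)) add0r.
Qed.

Lemma unit_mul_morph (a b : A) : e ** (a ** b) = (e ** a) ** (e ** b).
Proof.
rewrite -{1}(subrK (e ** a) a) -{1}(subrK (e ** b) b).
move: (unit_mul_subl a) (unit_mul_subr a) (unit_mul_subl b).
move: (a - e ** a) (b - e ** b) => n m en0 ne0 em0.
rewrite !(amulDl, amulDr) (ideal_mul_ann (I_mulr a I_unit) em0).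
rewrite (ann_mul_ideal (I_mulr b I_unit) ne0) unit_mul_ann_mul // amul0r !add0r.
exact: unit_mull (I_mulr _ (I_mulr _ I_unit)).
Qed.

End UnitalIdeal.

Section Homomorphisms.
Variables (F : fieldType) (A B : altAlg F) (f : A -> B).
Hypothesis f_hom : isHom f.

Lemma hom0 : f 0 = 0.
Proof. by case: f_hom => fD _ _; apply: (addrI (f 0)); rewrite -fD !addr0. Qed.

Lemma homN x : f (- x) = - f x.
Proof. by case: f_hom => fD _ _; apply: (addrI (f x)); rewrite -fD !subrr hom0. Qed.

End Homomorphisms.

Section SplitExtension.
Variables (F : fieldType) (X : altAlg F) (eX : X).
Hypothesis eX_unit : forall x : X, eX ** x = x /\ x ** eX = x.

Section OneExtension.
Variables (B : altAlg F) (E : splExt B X).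
Local Notation k := (sk E).
Local Notation alpha := (@salpha _ _ _ E).
Local Notation beta := (sbeta E).

(* A junk value is returned outside the image of [k]. *)
Definition sk_inv (a : sA E) : X := epsilon (inhabits 0) (fun x => k x = a).

Lemma sk_invK a : alpha a = 0 -> k (sk_inv a) = a.
Proof.
move=> /(sk_ker (s := E)) [x ->]; rewrite /sk_inv.
by apply: (epsilon_spec (inhabits 0) (fun y => k y = k x)); exists x.
Qed.

Lemma salpha_sk x : alpha (k x) = 0.
Proof. by apply/(sk_ker (s := E)); exists x. Qed.

Lemma ker_salpha_unital : unital_ideal (fun a => alpha a = 0) (k eX).
Proof.
case: (salpha_hom E) (sk_hom E) => _ _ aM [_ _ kM].
split=> [a x|a x||x]; rewrite ?aM ?salpha_sk //.
- by move=> ->; rewrite amul0r.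
- by move=> ->; rewrite amul0l.
by move=> /(sk_ker (s := E)) [y ->]; rewrite -!kM; case: (eX_unit y) => -> ->.
Qed.

Definition splExt_hom (b : B) : X := sk_inv (k eX ** beta b).

Lemma sk_splExt_hom b : k (splExt_hom b) = k eX ** beta b.
Proof. by apply: sk_invK; case: (salpha_hom E) => _ _ ->; rewrite salpha_sk amul0l. Qed.

Lemma sk_mul_sbeta x b : k x ** beta b = k (x ** splExt_hom b).
Proof.
case: (sk_hom E) => _ _ kM.
by rewrite kM sk_splExt_hom (ideal_mul_unit ker_salpha_unital _ (salpha_sk x)).
Qed.

Lemma sbeta_mul_sk x b : beta b ** k x = k (splExt_hom b ** x).
Proof.
case: (sk_hom E) => _ _ kM.
by rewrite kM sk_splExt_hom (unit_mul_ideal ker_salpha_unital _ (salpha_sk x)).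
Qed.

Lemma splExt_hom_isHom : isHom splExt_hom.
Proof.
case: (sk_hom E) (sbeta_hom E) => kD kZ kM [bD bZ bM].
split=> [x y|c x|x y]; apply: (sk_inj (s := E)); rewrite ?kD ?kZ ?kM !sk_splExt_hom.
- by rewrite bD amulDr.
- by rewrite bZ amulZr.
- by rewrite bM (unit_mul_morph ker_salpha_unital).
Qed.

Lemma splExt_decomp a : a = k (sk_inv (a - beta (alpha a))) + beta (alpha a).
Proof.
case: (salpha_hom E) => aD _ _.
by rewrite sk_invK ?subrK // aD (homN (salpha_hom E)) (ssplit E) subrr.
Qed.

Lemma splExt_decompP a : exists x b, a = k x + beta b.
Proof. by do 2 eexists; apply: splExt_decomp. Qed.

Lemma splExt_decomp_inj x b x' b' :
  k x + beta b = k x' + beta b' -> x = x' /\ b = b'.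
Proof.
case: (salpha_hom E) => aD _ _ H.
have bb' : b = b' by have := congr1 alpha H; rewrite !aD !salpha_sk !add0r !(ssplit E).
by split=> //; apply: (sk_inj (s := E)); subst b'; move/addIr: H.
Qed.

Lemma splExt_mul_decomp x1 b1 x2 b2 :
  (k x1 + beta b1) ** (k x2 + beta b2) =
  k (x1 ** x2 + x1 ** splExt_hom b2 + splExt_hom b1 ** x2) + beta (b1 ** b2).
Proof.
case: (sk_hom E) (sbeta_hom E) => kD _ kM [_ _ bM].
rewrite !(amulDl, amulDr) sk_mul_sbeta sbeta_mul_sk -bM !kD !addrA.
by rewrite (kM x1 x2).
Qed.

End OneExtension.

Lemma splExt_hom_natural (B B' : altAlg F) (f : B' -> B)
    (E : splExt B X) (E' : splExt B' X) (g : sA E' -> sA E) :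
  isHom g -> (forall x, g (sk E' x) = sk E x) ->
  (forall b', g (sbeta E' b') = sbeta E (f b')) ->
  splExt_hom E' =1 (fun b' => splExt_hom E (f b')).
Proof.
case=> _ _ gM gk gb b'; apply: (sk_inj (s := E)).
by rewrite -gk sk_splExt_hom gM gk gb sk_splExt_hom.
Qed.

Section Transport.
Variables (B : altAlg F) (E E' : splExt B X).

Definition splExt_transport (a : sA E) : sA E' :=
  sk E' (sk_inv (a - sbeta E (salpha a))) + sbeta E' (salpha a).

Lemma splExt_transport_decomp x b :
  splExt_transport (sk E x + sbeta E b) = sk E' x + sbeta E' b.
Proof.
rewrite /splExt_transport.
by have [-> ->] := splExt_decomp_inj (esym (splExt_decomp (sk E x + sbeta E b))).
Qed.

Hypothesis hom_eq : splExt_hom E =1 splExt_hom E'.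

Lemma splExt_transport_isHom : isHom splExt_transport.
Proof.
have [kD kZ _] := sk_hom E; have [kD' kZ' _] := sk_hom E'.
have [bD bZ _] := sbeta_hom E; have [bD' bZ' _] := sbeta_hom E'.
split=> [a1 a2|c a|a1 a2].
- have [x1 [b1 ->]] := splExt_decompP a1; have [x2 [b2 ->]] := splExt_decompP a2.
  by rewrite addrACA -kD -bD !splExt_transport_decomp addrACA -kD' -bD'.
- have [x [b ->]] := splExt_decompP a.
  by rewrite scalerDr -kZ -bZ !splExt_transport_decomp scalerDr -kZ' -bZ'.
- have [x1 [b1 ->]] := splExt_decompP a1; have [x2 [b2 ->]] := splExt_decompP a2.
  by rewrite splExt_mul_decomp !splExt_transport_decomp splExt_mul_decomp !hom_eq.
Qed.

End Transport.
Arguments splExt_transport {B} E E' a.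
Arguments splExt_transport_decomp {B} E E' x b.

Lemma splExt_iso_of_hom_eq (B : altAlg F) (E E' : splExt B X) :
  splExt_hom E =1 splExt_hom E' -> splExt_iso E E'.
Proof.
move=> hom_eq; exists (splExt_transport E E'); split.
- exact: splExt_transport_isHom.
- exists (splExt_transport E' E) => a; have [x [b ->]] := splExt_decompP a;
    by rewrite !splExt_transport_decomp.
- move=> x; have := splExt_transport_decomp E E' x 0.
  by rewrite (hom0 (sbeta_hom E)) (hom0 (sbeta_hom E')) !addr0.
- move=> a; case: (salpha_hom E') => aD _ _.
  by rewrite /splExt_transport aD salpha_sk add0r ssplit.
- move=> b; have := splExt_transport_decomp E E' 0 b.
  by rewrite (hom0 (sk_hom E)) (hom0 (sk_hom E')) !add0r.
Qed.

End SplitExtension.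

Section Product.
Variables (F : fieldType) (A1 A2 : altAlg F).

Definition prod_mul (p q : A1 * A2) : A1 * A2 := (p.1 ** q.1, p.2 ** q.2).

Lemma prod_mulDl x y z : prod_mul (x + y) z = prod_mul x z + prod_mul y z.
Proof. by rewrite /prod_mul /= !amulDl. Qed.

Lemma prod_mulDr x y z : prod_mul x (y + z) = prod_mul x y + prod_mul x z.
Proof. by rewrite /prod_mul /= !amulDr. Qed.

Lemma prod_mulZl (a : F) x y : prod_mul (a *: x) y = a *: prod_mul x y.
Proof. by rewrite /prod_mul /= !amulZl. Qed.

Lemma prod_mulZr (a : F) x y : prod_mul x (a *: y) = a *: prod_mul x y.
Proof. by rewrite /prod_mul /= !amulZr. Qed.

Lemma prod_alt_right x y : prod_mul (prod_mul y x) x = prod_mul y (prod_mul x x).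
Proof. by rewrite /prod_mul /= !alt_right. Qed.

Lemma prod_alt_left x y : prod_mul x (prod_mul x y) = prod_mul (prod_mul x x) y.
Proof. by rewrite /prod_mul /= !alt_left. Qed.

Definition prodAlg : altAlg F :=
  AltAlg prod_mulDl prod_mulDr prod_mulZl prod_mulZr prod_alt_right prod_alt_left.

End Product.

Section GraphExtension.
Variables (F : fieldType) (B X : altAlg F) (h : B -> X).
Hypothesis h_hom : isHom h.

Let inl_hom : isHom (fun x : X => (x, 0) : prodAlg X B).
Proof.
split=> [x y|c x|x y] /=; rewrite /prod_mul /= ?amul0l //.
- by rewrite -[in LHS](addr0 0).
- by rewrite -[in LHS](scaler0 _ c).
Qed.

Let snd_hom : isHom (fun p : prodAlg X B => p.2). Proof. by []. Qed.

Let graph_hom : isHom (fun b : B => (h b, b) : prodAlg X B).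
Proof.
by case: h_hom => hD hZ hM; split=> [x y|c x|x y]; rewrite /= /prod_mul /= ?hD ?hZ ?hM.
Qed.

Let inl_inj : injective (fun x : X => (x, 0) : prodAlg X B).
Proof. by move=> x y []. Qed.

Let inl_ker (p : prodAlg X B) : p.2 = 0 <-> exists x, p = (x, 0).
Proof.
by case: p => x b /=; split=> [->|[y [_ ->]]] //; exists x.
Qed.

Definition graph_splExt : splExt B X :=
  SplExt inl_hom snd_hom graph_hom (fun _ => erefl) inl_inj inl_ker.

Lemma splExt_hom_graph (eX : X) :
  (forall x : X, eX ** x = x /\ x ** eX = x) -> splExt_hom eX graph_splExt =1 h.
Proof.
move=> eX_unit b; apply: (sk_inj (s := graph_splExt)).
rewrite sk_splExt_hom //= /prod_mul /= amul0l.
by case: (eX_unit (h b)) => ->.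
Qed.

End GraphExtension.

Theorem theorem3p2 (F : fieldType) (hF : 2%N \notin [pchar F])
    (X : altAlg F) (hX : has_unit X) :
  exists Phi : forall B : altAlg F, splExt B X -> (B -> X),
    [/\ forall (B : altAlg F) (E : splExt B X), isHom (Phi B E),
        forall (B : altAlg F) (E E' : splExt B X),
          splExt_iso E E' -> Phi B E =1 Phi B E',
        forall (B : altAlg F) (E E' : splExt B X),
          Phi B E =1 Phi B E' -> splExt_iso E E',
        forall (B : altAlg F) (h : B -> X), isHom h ->
          exists E : splExt B X, Phi B E =1 h
      & forall (B B' : altAlg F) (f : B' -> B), isHom f ->
          forall (E : splExt B X) (E' : splExt B' X), isPullback f E E' ->
            Phi B' E' =1 (fun b' => Phi B E (f b'))].
Proof.
(* The argument works in every characteristic. *)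
case: hX => eX eX_unit.
exists (fun B E => splExt_hom eX E); split.
- by move=> B E; apply: splExt_hom_isHom.
- move=> B E E' [phi [phi_hom _ phik _ phib]] b.
  exact: (splExt_hom_natural eX (f := id) phi_hom phik phib).
- by move=> B E E'; apply: splExt_iso_of_hom_eq.
- by move=> B h h_hom; exists (graph_splExt h_hom); apply: splExt_hom_graph.
- move=> B B' f _ E E' [g [[g_hom _] gk gb _ _]] b'.
  exact: (splExt_hom_natural eX g_hom gk gb).
Qed.
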